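(* Let $G$ be a group. Let $H_l:\mathrm{ACT}_l(G)\to\mathrm{ACT}(G)$ send a left $G$-set $(X,\mu)$, $\mu:G\to\mathrm{End}_l(X)$, to the $G$-set $(X,(\mu,\iota_r))$ with $\iota_r$ trivial, and $H_r:\mathrm{ACT}_r(G)\to\mathrm{ACT}(G)$ send a right $G$-set $(X,\nu)$ to $(X,(\iota_l,\nu))$ with $\iota_l$ trivial (both being the identity on morphisms); these are equivalences of categories. Let $\mathrm{inv}^r_l:\mathrm{ACT}_l(G)\to\mathrm{ACT}_r(G)$ send a left action $(g,x)\mapsto g.x$ to the right action $(x,g)\mapsto g^{-1}.x$. Then the functors $\mathrm{Map}^l_G\circ H_l$ and $H_r\circ \mathrm{inv}^r_l$ from $\mathrm{ACT}_l(G)$ to $\mathrm{ACT}(G)$ are naturally isomorphic.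
   Context: For a set $X$, $\mathrm{End}_l(X)$ denotes self-maps of $X$ written on the left with product $f\circ g$ ($g$ first); $\mathrm{End}_r(X)$ denotes self-maps written on the right, $x\mapsto(x)f$, with $(x)(fg)=((x)f)g$. For a group $G$, a $G$-set is a set $X$ with a pair $\xi=(\xi_l,\xi_r)$ of monoid homomorphisms $\xi_l:G\to\mathrm{End}_l(X)$, $\xi_r:G\to\mathrm{End}_r(X)$ with $(\xi_l(i)(x))\xi_r(j)=\xi_l(i)((x)\xi_r(j))$; an equivariant function $f:(X,\xi)\to(Y,\eta)$ satisfies $(f(\xi_l(g)(x)))\eta_r(g)=\eta_l(g)(f((x)\xi_r(g)))$ for all $g,x$. $\mathrm{ACT}(G)$ is the category of such $G$-sets (for a group every such action is invertible on both sides) with equivariant functions; $\mathrm{ACT}_l(G)$, $\mathrm{ACT}_r(G)$ are the usual categories of left and right $G$-sets. For a $G$-set $(A,\alpha)$, $\mathrm{Map}^l_G(A)$ is the set of functions $f:G\to A$ with $(f(j))\alpha_r(i)=\alpha_l(i)(f(ji))$ for all $i,j\in G$, with $G$-action $\theta$: $\theta_l(k)=\mathrm{id}$, $((f)\theta_r(k))(j)=f(kj)$; on morphisms $\mathrm{Map}^l_G(u)(h)=u\circ h$. *)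

From Stdlib Require Import FunctionalExtensionality ProofIrrelevance.

Set Implicit Arguments.

Record Group := {
  gcar :> Type;
  gmul : gcar -> gcar -> gcar;
  gone : gcar;
  ginv : gcar -> gcar;
  gmulA : forall a b c, gmul a (gmul b c) = gmul (gmul a b) c;
  gmul1l : forall a, gmul gone a = a;
  gmul1r : forall a, gmul a gone = a;
  gmulVl : forall a, gmul (ginv a) a = gone;
  gmulVr : forall a, gmul a (ginv a) = gone
}.

Arguments gmul {_}. Arguments gone {_}. Arguments ginv {_}.

Lemma ginv1 (G : Group) : ginv (@gone G) = gone.
Proof. rewrite <- (gmul1r G (ginv gone)). apply gmulVl. Qed.

Lemma ginvM (G : Group) (g h : G) : ginv (gmul g h) = gmul (ginv h) (ginv g).
Proof.
  assert (E : gmul (gmul g h) (gmul (ginv h) (ginv g)) = gone).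
  { rewrite <- gmulA, (gmulA G h), gmulVr, gmul1l, gmulVr. reflexivity. }
  rewrite <- (gmul1r G (ginv (gmul g h))), <- E, gmulA, gmulVl, gmul1l.
  reflexivity.
Qed.

Lemma sig_ext (A : Type) (P : A -> Prop) (x y : sig P) :
  proj1_sig x = proj1_sig y -> x = y.
Proof.
  destruct x as [x px], y as [y py]; simpl; intros ->.
  f_equal; apply proof_irrelevance.
Qed.

(* Objects of ACT(G): a set with a left action xi_l : G -> End_l(X)
   (monoid hom: xi_l(gh) = xi_l(g) o xi_l(h)) and a right action
   xi_r : G -> End_r(X) (monoid hom for the right-written composition:
   (x)xi_r(gh) = ((x)xi_r(g))xi_r(h)), which commute. gs_r g x = (x)xi_r(g). *)
Record Gset (G : Group) := {
  gs_car :> Type;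
  gs_l : G -> gs_car -> gs_car;
  gs_r : G -> gs_car -> gs_car;
  gs_l1 : forall x, gs_l gone x = x;
  gs_lM : forall g h x, gs_l (gmul g h) x = gs_l g (gs_l h x);
  gs_r1 : forall x, gs_r gone x = x;
  gs_rM : forall g h x, gs_r (gmul g h) x = gs_r h (gs_r g x);
  gs_comm : forall i j x, gs_r j (gs_l i x) = gs_l i (gs_r j x)
}.

Definition equivariant (G : Group) (X Y : Gset G) (f : X -> Y) : Prop :=
  forall (g : G) (x : X), gs_r Y g (f (gs_l X g x)) = gs_l Y g (f (gs_r X g x)).

Arguments equivariant {G X Y} f.

Definition Giso (G : Group) (X Y : Gset G) (f : X -> Y) : Prop :=
  equivariant f /\
  exists g : Y -> X, equivariant g /\
    (forall x, g (f x) = x) /\ (forall y, f (g y) = y).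

Arguments Giso {G X Y} f.

Record LGset (G : Group) := {
  ls_car :> Type;
  ls_act : G -> ls_car -> ls_car;
  ls_1 : forall x, ls_act gone x = x;
  ls_M : forall g h x, ls_act (gmul g h) x = ls_act g (ls_act h x)
}.

Definition lequivariant (G : Group) (X Y : LGset G) (f : X -> Y) : Prop :=
  forall (g : G) (x : X), f (ls_act X g x) = ls_act Y g (f x).

(* Objects of ACT_r(G): right G-sets, rs_act g x = (x)g. *)
Record RGset (G : Group) := {
  rs_car :> Type;
  rs_act : G -> rs_car -> rs_car;
  rs_1 : forall x, rs_act gone x = x;
  rs_M : forall g h x, rs_act (gmul g h) x = rs_act h (rs_act g x)
}.

Definition H_l (G : Group) (X : LGset G) : Gset G :=
  {| gs_car := X; gs_l := ls_act X; gs_r := fun _ x => x;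
     gs_l1 := ls_1 X; gs_lM := ls_M X;
     gs_r1 := fun _ => eq_refl; gs_rM := fun _ _ _ => eq_refl;
     gs_comm := fun _ _ _ => eq_refl |}.

Lemma H_l_mor (G : Group) (X Y : LGset G) (u : X -> Y) :
  lequivariant X Y u -> @equivariant G (H_l X) (H_l Y) u.
Proof. intros Hu g x; simpl. apply Hu. Qed.

Definition H_r (G : Group) (X : RGset G) : Gset G :=
  {| gs_car := X; gs_l := fun _ x => x; gs_r := rs_act X;
     gs_l1 := fun _ => eq_refl; gs_lM := fun _ _ _ => eq_refl;
     gs_r1 := rs_1 X; gs_rM := rs_M X;
     gs_comm := fun _ _ _ => eq_refl |}.

Lemma inv_lr_1 (G : Group) (X : LGset G) (x : X) : ls_act X (ginv gone) x = x.
Proof. rewrite ginv1. apply ls_1. Qed.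

Lemma inv_lr_M (G : Group) (X : LGset G) (g h : G) (x : X) :
  ls_act X (ginv (gmul g h)) x = ls_act X (ginv h) (ls_act X (ginv g) x).
Proof. rewrite ginvM. apply ls_M. Qed.

Definition inv_lr (G : Group) (X : LGset G) : RGset G :=
  {| rs_car := X; rs_act := fun g x => ls_act X (ginv g) x;
     rs_1 := inv_lr_1 X; rs_M := inv_lr_M X |}.

(* Map^l_G(A) = { f : G -> A | (f j)alpha_r(i) = alpha_l(i)(f(j i)) },
   with theta_l trivial and (f)theta_r(k) = fun j => f (k j). *)
Definition mapG_prop (G : Group) (A : Gset G) (f : G -> A) : Prop :=
  forall i j : G, gs_r A i (f j) = gs_l A i (f (gmul j i)).

Arguments mapG_prop {G A} f.

Definition MapG_car (G : Group) (A : Gset G) : Type := { f : G -> A | mapG_prop f }.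

Lemma mapG_shift (G : Group) (A : Gset G) (k : G) (f : G -> A) :
  mapG_prop f -> mapG_prop (fun j => f (gmul k j)).
Proof. intros Hf i j. rewrite Hf, gmulA. reflexivity. Qed.

Definition MapG_r (G : Group) (A : Gset G) (k : G) (f : MapG_car A) : MapG_car A :=
  exist _ (fun j => proj1_sig f (gmul k j)) (mapG_shift k (proj2_sig f)).

Lemma MapG_r1 (G : Group) (A : Gset G) (f : MapG_car A) : MapG_r gone f = f.
Proof.
  apply sig_ext; simpl; apply functional_extensionality; intro j.
  rewrite gmul1l; reflexivity.
Qed.

Lemma MapG_rM (G : Group) (A : Gset G) (g h : G) (f : MapG_car A) :
  MapG_r (gmul g h) f = MapG_r h (MapG_r g f).
Proof.
  apply sig_ext; simpl; apply functional_extensionality; intro j.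
  rewrite gmulA; reflexivity.
Qed.

Definition MapG (G : Group) (A : Gset G) : Gset G :=
  {| gs_car := MapG_car A; gs_l := fun _ f => f; gs_r := @MapG_r G A;
     gs_l1 := fun _ => eq_refl; gs_lM := fun _ _ _ => eq_refl;
     gs_r1 := @MapG_r1 G A; gs_rM := @MapG_rM G A;
     gs_comm := fun _ _ _ => eq_refl |}.

Lemma mapG_comp (G : Group) (A B : Gset G) (u : A -> B) (Hu : equivariant u)
  (h : G -> A) : mapG_prop h -> mapG_prop (fun j => u (h j)).
Proof.
  intros Hh i j.
  set (y := h (gmul j i)).
  set (x := gs_r A (ginv i) y).
  assert (E1 : gs_l A i x = h j).
  { unfold x. rewrite <- gs_comm. unfold y. rewrite <- Hh, <- gs_rM, gmulVr, gs_r1.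
    reflexivity. }
  assert (E2 : gs_r A i x = y).
  { unfold x. rewrite <- gs_rM, gmulVl, gs_r1. reflexivity. }
  rewrite <- E1, Hu, E2. reflexivity.
Qed.

Definition MapG_mor (G : Group) (A B : Gset G) (u : A -> B) (Hu : equivariant u)
  (h : MapG A) : MapG B :=
  exist _ (fun j => u (proj1_sig h j)) (mapG_comp Hu (proj2_sig h)).

From Stdlib Require Import FunctionalExtensionality.

(* With the trivial right action on H_l X, the defining condition of
   Map^l_G at j = 1 reads f(i) = i^{-1}.f(1), so an element of
   Map^l_G(H_l X) is determined by its value at 1.  Evaluation at 1 is thus
   a bijection onto X, with inverse x |-> (j |-> j^{-1}.x); it transports
   translation k.f = f(k _) to x |-> k^{-1}.x, and it commutes with
   post-composition on the nose, which is naturality. *)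

Section EvalAtOne.

Variables (G : Group) (X : LGset G).

Definition orbit_fun (x : X) : G -> X := fun j => ls_act X (ginv j) x.

Lemma orbit_fun_mapG (x : X) : @mapG_prop G (H_l X) (orbit_fun x).
Proof.
  intros i j; unfold orbit_fun; simpl.
  rewrite <- ls_M, ginvM, gmulA, gmulVr, gmul1l. reflexivity.
Qed.

Definition orbit_map (x : H_r (inv_lr X)) : MapG (H_l X) := exist _ _ (orbit_fun_mapG x).

Definition eval1 (f : MapG (H_l X)) : H_r (inv_lr X) := proj1_sig f gone.

Lemma mapG_val_eval1 (f : MapG (H_l X)) (g : G) :
  proj1_sig f g = ls_act X (ginv g) (eval1 f).
Proof.
  destruct f as [f Hf]; unfold eval1; simpl.
  pose proof (Hf g gone) as E; simpl in E; rewrite gmul1l in E.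
  rewrite E, <- ls_M, gmulVl, ls_1. reflexivity.
Qed.

Lemma eval1_orbit_map (x : X) : eval1 (orbit_map x) = x.
Proof. exact (inv_lr_1 X x). Qed.

Lemma orbit_map_eval1 (f : MapG (H_l X)) : orbit_map (eval1 f) = f.
Proof.
  apply sig_ext; simpl; apply functional_extensionality; intro j.
  symmetry; apply mapG_val_eval1.
Qed.

Lemma eval1_equivariant : equivariant eval1.
Proof.
  intros g f; unfold eval1; simpl.
  rewrite gmul1r. symmetry. apply mapG_val_eval1.
Qed.

Lemma orbit_map_equivariant : equivariant orbit_map.
Proof.
  intros g x; apply sig_ext; simpl; apply functional_extensionality; intro j.
  unfold orbit_fun. rewrite ginvM, ls_M. reflexivity.
Qed.

Lemma eval1_Giso : Giso eval1.
Proof.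
  split; [exact eval1_equivariant |].
  exists orbit_map.
  split; [exact orbit_map_equivariant | split].
  - exact orbit_map_eval1.
  - exact eval1_orbit_map.
Qed.

End EvalAtOne.

Theorem mainTheorem8 (G : Group) :
  exists eta : forall X : LGset G, MapG (H_l X) -> H_r (inv_lr X),
    (forall X : LGset G, @Giso G (MapG (H_l X)) (H_r (inv_lr X)) (eta X)) /\
    (forall (X Y : LGset G) (u : X -> Y) (Hu : lequivariant X Y u)
            (h : MapG (H_l X)),
       eta Y (MapG_mor (H_l_mor Hu) h) = u (eta X h)).
Proof.
  exists (@eval1 G). split.
  - exact (@eval1_Giso G).
  - reflexivity.
Qed.
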